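(* Let $k\ge 0$ and $n>3k$ be integers. Then the set of maximal simplices of $\mathrm{VR}(T_{n,n};k)$ equals $M_{n,k}=\{\pi_n(\sigma):\sigma \text{ a maximal simplex of } \mathrm{VR}(\mathbb{Z}^2;k)\}$.
   Context: $\mathbb{Z}^2$ carries the $l^1$ metric. $T_{n,n}=\mathbb{Z}^2/(n\mathbb{Z}\times n\mathbb{Z})$ with quotient map $\pi_n$ (reduction mod $n$) and quotient metric $d([x],[y])=\min\{d(x',y'):\pi_n(x')=[x],\pi_n(y')=[y]\}$. $\mathrm{VR}(X;r)$ is the simplicial complex on $X$ whose simplices are the finite nonempty subsets of diameter at most $r$; a maximal simplex is one not properly contained in another. *)

From HB Require Import structures.
From mathcomp Require Import all_boot all_order all_algebra.
From mathcomp Require Import finmap.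
Set Implicit Arguments. Unset Strict Implicit. Unset Printing Implicit Defensive.
Import Order.TTheory GRing.Theory Num.Theory.
Local Open Scope ring_scope.
Local Open Scope fset_scope.

Definition Z2 := (int * int)%type.

Definition l1 (x y : Z2) : int := `|x.1 - y.1| + `|x.2 - y.2|.

(* Torus T_{n,n} = Z^2 / (nZ x nZ), points represented by residues in 'I_n. *)
Definition torus (n : nat) := ('I_n * 'I_n)%type.

Definition proj_to (n : nat) (x : Z2) (a : torus n) : bool :=
  ((x.1 %% n%:Z)%Z == (a.1 : nat)%:Z) && ((x.2 %% n%:Z)%Z == (a.2 : nat)%:Z).

(* quotient metric: d([x],[y]) <= r iff some lifts are at l1 distance <= r
   (the min over lifts of a nonnegative-integer valued distance is attained) *)
Definition tdist_le (n : nat) (a b : torus n) (r : nat) : Prop :=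
  exists x y : Z2, proj_to x a /\ proj_to y b /\ l1 x y <= r%:Z.

Definition VR_Z2_simplex (r : nat) (s : {fset Z2}) : Prop :=
  s != fset0 /\ (forall x y, x \in s -> y \in s -> l1 x y <= r%:Z).

Definition VR_Z2_maximal (r : nat) (s : {fset Z2}) : Prop :=
  VR_Z2_simplex r s /\ (forall t, VR_Z2_simplex r t -> ~~ (s `<` t)).

Definition VR_T_simplex (n r : nat) (A : {set torus n}) : Prop :=
  A != set0 /\ (forall a b, a \in A -> b \in A -> tdist_le a b r).

Definition VR_T_maximal (n r : nat) (A : {set torus n}) : Prop :=
  VR_T_simplex r A /\ (forall B, VR_T_simplex r B -> ~~ (A \proper B)).

Definition proj_set (n : nat) (s : {fset Z2}) : {set torus n} :=
  [set a | [exists x : s, proj_to (val x) a]].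

From HB Require Import structures.
From mathcomp Require Import all_boot all_order all_algebra.
From mathcomp Require Import finmap zify ring.
Import Order.TTheory GRing.Theory Num.Theory.
Local Open Scope fset_scope.

(* A simplex A of VR(T_{n,n}; k) lifts to a simplex of VR(Z^2; k): fix a lift
   x0 of a point a0 of A and lift every a in A to the unique lift within
   distance k of x0 (unique since 2k < n).  Two such lifts x, y of a, b are at
   distance <= k: some lift y' of b is within k of x, and y, y' are lifts of b
   at distance <= 3k < n, hence equal.  Conversely, distinct points of a set
   of diameter at most 2k < n have distinct projections, so proper inclusions
   of simplices transfer in both directions between Z^2 and the torus. *)

Section L1Metric.
Local Open Scope ring_scope.

Lemma l1C (x y : Z2) : l1 x y = l1 y x.
Proof. by rewrite /l1 (distrC x.1) (distrC x.2). Qed.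

Lemma l1_triangle (x y z : Z2) : l1 x z <= l1 x y + l1 y z.
Proof.
rewrite /l1; have := ler_distD y.1 x.1 z.1; have := ler_distD y.2 x.2 z.2.
lia.
Qed.

Lemma l1_translate (x x' y : Z2) : l1 x' (y + (x' - x)) = l1 x y.
Proof.
rewrite /l1 /=.
have -> : x'.1 - (y.1 + (x'.1 - x.1)) = x.1 - y.1 by ring.
by have -> : x'.2 - (y.2 + (x'.2 - x.2)) = x.2 - y.2 by ring.
Qed.

Lemma l1_lt_of_ball (c x y : Z2) (r m : nat) :
  (2 * r < m)%N -> l1 c x <= r%:Z -> l1 c y <= r%:Z -> l1 x y < m%:Z.
Proof. by move=> lt_rm cx cy; have := l1_triangle x c y; rewrite (l1C x c); lia. Qed.

End L1Metric.

Section TorusLifts.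
Local Open Scope ring_scope.
Context {n : nat}.

Lemma eqz_mod_small (x y : int) :
  (x == y %[mod n])%Z -> `|x - y| < n%:Z -> x = y.
Proof.
rewrite eqz_mod_dvd => /dvdzP[q exy]; rewrite exy => lt_qn.
have q0 : q = 0 by nia.
by apply/eqP; rewrite -subr_eq0 exy q0 mul0r.
Qed.

Lemma modzD_eqmod (y u v : int) :
  (u == v %[mod n])%Z -> ((y + (u - v)) %% n)%Z = (y %% n)%Z.
Proof. by rewrite eqz_mod_dvd => /dvdzP[q ->]; rewrite addrC modzMDl. Qed.

Lemma proj_to_fun {x : Z2} {a b : torus n} :
  proj_to x a -> proj_to x b -> a = b.
Proof.
case: a b => [a1 a2] [b1 b2] /andP[/eqP xa1 /eqP xa2] /andP[/eqP xb1 /eqP xb2].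
move: xa1 xa2; rewrite xb1 xb2 => -[eq1] [eq2].
by congr pair; apply/val_inj.
Qed.

Lemma proj_to_exists (x : Z2) : (0 < n)%N -> exists a : torus n, proj_to x a.
Proof.
case: n => // m _; have d_gt0 : 0 < m.+1%:Z by [].
have [ge1 ge2] := (modz_ge0 x.1 (lt0r_neq0 d_gt0), modz_ge0 x.2 (lt0r_neq0 d_gt0)).
have [lt1 lt2] := (ltz_pmod x.1 d_gt0, ltz_pmod x.2 d_gt0).
exists (inord `|(x.1 %% m.+1)%Z|%N, inord `|(x.2 %% m.+1)%Z|%N).
by rewrite /proj_to /= !inordK; [apply/andP; split; apply/eqP| |]; lia.
Qed.

Lemma lift_exists (a : torus n) : exists x : Z2, proj_to x a.
Proof.
exists ((a.1 : nat)%:Z, (a.2 : nat)%:Z).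
have [lt1 lt2] := (ltn_ord a.1, ltn_ord a.2).
by rewrite /proj_to /= !modz_small //; apply/andP; split; lia.
Qed.

Lemma proj_to_l1_eq {x y : Z2} {a : torus n} :
  proj_to x a -> proj_to y a -> l1 x y < n%:Z -> x = y.
Proof.
case: x y => [x1 x2] [y1 y2] /andP[/eqP xa1 /eqP xa2] /andP[/eqP ya1 /eqP ya2].
rewrite /l1 /= => lt_xy.
have lt1 : `|x1 - y1| < n%:Z by apply: le_lt_trans lt_xy; rewrite lerDl.
have lt2 : `|x2 - y2| < n%:Z by apply: le_lt_trans lt_xy; rewrite lerDr.
by congr pair; apply: eqz_mod_small; rewrite ?xa1 ?xa2 ?ya1 ?ya2.
Qed.

Lemma proj_to_translate {x x' y : Z2} {a b : torus n} :
  proj_to x a -> proj_to x' a -> proj_to y b -> proj_to (y + (x' - x)) b.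
Proof.
move=> /andP[/eqP xa1 /eqP xa2] /andP[/eqP x'a1 /eqP x'a2] yb.
by rewrite /proj_to /= !modzD_eqmod ?xa1 ?xa2 ?x'a1 ?x'a2.
Qed.

End TorusLifts.

Section VietorisRips.
Local Open Scope ring_scope.
Variables k n : nat.

Lemma proj_setP (s : {fset Z2}) (a : torus n) :
  reflect (exists2 x, x \in s & proj_to x a) (a \in proj_set n s).
Proof.
rewrite inE; apply: (iffP existsP) => [[x xa]|[x xs xa]].
- by exists (val x) => //; exact: fsvalP.
- by exists [` xs].
Qed.

Lemma proj_set_fsubset (s t : {fset Z2}) :
  s `<=` t -> proj_set n s \subset proj_set n t.
Proof.
move=> /fsubsetP st; apply/subsetP => a /proj_setP[x xs xa].
by apply/proj_setP; exists x; first exact: st.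
Qed.

Lemma proj_set_simplex {s : {fset Z2}} :
  (0 < n)%N -> VR_Z2_simplex k s -> VR_T_simplex k (proj_set n s).
Proof.
move=> n_gt0 [/fset0Pn[x0 x0s] diam_s]; split.
- have [a0 x0a0] := proj_to_exists x0 n_gt0.
  by apply/set0Pn; exists a0; apply/proj_setP; exists x0.
- move=> a b /proj_setP[x xs xa] /proj_setP[y ys yb].
  by exists x, y; split; [|split]; last exact: diam_s.
Qed.

Lemma near_lift {x0 : Z2} {a0 a : torus n} :
  proj_to x0 a0 -> tdist_le a0 a k -> exists2 y, proj_to y a & l1 x0 y <= k%:Z.
Proof.
move=> x0a0 [x [y [xa0 [ya d_xy]]]].
exists (y + (x0 - x)); first exact: proj_to_translate xa0 x0a0 ya.
by rewrite l1_translate.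
Qed.

Lemma near_lifts_close {x0 x y : Z2} {a b : torus n} :
  (3 * k < n)%N -> proj_to x a -> proj_to y b ->
  l1 x0 x <= k%:Z -> l1 x0 y <= k%:Z -> tdist_le a b k -> l1 x y <= k%:Z.
Proof.
move=> hn xa yb d_x d_y /(near_lift xa)[y' y'b d_xy'].
suff -> : y = y' by [].
apply: (proj_to_l1_eq yb y'b).
have := l1_triangle y x0 y'; have := l1_triangle x0 x y'.
rewrite (l1C y x0); lia.
Qed.

Lemma VR_T_simplex_lift {A : {set torus n}} {a0 : torus n} {x0 : Z2} :
  (3 * k < n)%N -> VR_T_simplex k A -> a0 \in A -> proj_to x0 a0 ->
  exists t : {fset Z2}, [/\ VR_Z2_simplex k t, proj_set n t = A &
    forall y, y \in t -> l1 x0 y <= k%:Z].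
Proof.
move=> hn [_ diam_A] a0A x0a0.
have /fin_all_exists[f fP] : forall a : torus n, exists y : Z2,
    a \in A -> proj_to y a /\ l1 x0 y <= k%:Z.
  move=> a; case: (boolP (a \in A)) => aA; last by exists x0.
  have [y ya d_y] := near_lift x0a0 (diam_A a0 a a0A aA).
  by exists y.
exists [fset f a | a in A]; split.
- split; first by apply/fset0Pn; exists (f a0); apply/imfsetP; exists a0.
  move=> _ _ /imfsetP[a /= aA ->] /imfsetP[b /= bA ->].
  have [[fa d_a] [fb d_b]] := (fP a aA, fP b bA).
  exact: near_lifts_close hn fa fb d_a d_b (diam_A a b aA bA).
- apply/setP => a; apply/proj_setP/idP => [[_ /imfsetP[b /= bA ->] fba]|aA].
  + by have [fbb _] := fP b bA; rewrite (proj_to_fun fba fbb).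
  + by exists (f a); [apply/imfsetP; exists a | have [] := fP a aA].
- by move=> _ /imfsetP[a /= aA ->]; have [] := fP a aA.
Qed.

Lemma VR_T_maximal_lift (A : {set torus n}) :
  (3 * k < n)%N -> VR_T_maximal k A ->
  exists s : {fset Z2}, VR_Z2_maximal k s /\ A = proj_set n s.
Proof.
move=> hn [simp_A maxA]; have [k_lt_n n_gt0] : (k < n)%N /\ (0 < n)%N by lia.
have /set0Pn[a0 a0A] := simp_A.1.
have [x0 x0a0] := lift_exists a0.
have [t [simp_t tA _]] := VR_T_simplex_lift hn simp_A a0A x0a0.
exists t; split=> //; split=> // u simp_u; apply/negP => tu.
have /fsubsetPn[y yu yt] : ~~ (u `<=` t) by move: tu; rewrite fproperE => /andP[].
have uA : proj_set n u \subset A.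
  have := maxA _ (proj_set_simplex n_gt0 simp_u).
  by rewrite properE -tA proj_set_fsubset ?fproper_sub //= negbK.
have [b yb] := proj_to_exists y n_gt0.
have : b \in proj_set n u by apply/proj_setP; exists y.
move=> /(subsetP uA); rewrite -tA => /proj_setP[x xt xb].
have xu : x \in u by exact: (fsubsetP (fproper_sub tu)).
have /(proj_to_l1_eq xb yb) xy : l1 x y < n%:Z.
  by apply: le_lt_trans (simp_u.2 x y xu yu) _; rewrite ltz_nat.
by rewrite -xy xt in yt.
Qed.

Lemma proj_set_maximal (s : {fset Z2}) :
  (3 * k < n)%N -> VR_Z2_maximal k s -> VR_T_maximal k (proj_set n s).
Proof.
move=> hn [[s0 diam_s] maxs].
have [two_k_lt_n n_gt0] : (2 * k < n)%N /\ (0 < n)%N by lia.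
split; first exact: proj_set_simplex n_gt0 (conj s0 diam_s).
move=> B simp_B; apply/negP => /properP[sB [b bB bs]].
have /fset0Pn[x0 x0s] := s0; have [a0 x0a0] := proj_to_exists x0 n_gt0.
have a0B : a0 \in B by apply: (subsetP sB); apply/proj_setP; exists x0.
have [t [simp_t tB near_t]] := VR_T_simplex_lift hn simp_B a0B x0a0.
apply: (negP (maxs t simp_t)); rewrite fproperE; apply/andP; split.
- apply/fsubsetP => x xs; have [a xa] := proj_to_exists x n_gt0.
  have : a \in B by apply: (subsetP sB); apply/proj_setP; exists x.
  rewrite -tB => /proj_setP[y yt ya].
  suff -> : x = y by [].
  apply: (proj_to_l1_eq xa ya).
  exact: l1_lt_of_ball two_k_lt_n (diam_s x0 x x0s xs) (near_t y yt).
- move: bB; rewrite -tB => /proj_setP[y yt yb].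
  apply/fsubsetPn; exists y => //; apply: contra bs => ys.
  by apply/proj_setP; exists y.
Qed.

End VietorisRips.

Theorem lemma5p6 (k n : nat) (hn : 3 * k < n) (A : {set torus n}) :
  VR_T_maximal k A <-> exists s : {fset Z2}, VR_Z2_maximal k s /\ A = proj_set n s.
Proof.
split; first exact: VR_T_maximal_lift.
by move=> [s [maxs ->]]; exact: proj_set_maximal.
Qed.
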